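(* Let $f\in\mathbb{Q}[x]$ be a product of cyclotomic polynomials, $f=\Phi_{i_1}^{e_1}\Phi_{i_2}^{e_2}\cdots\Phi_{i_k}^{e_k}$, where the $i_j$ are distinct positive integers, the $e_j$ are positive integers, and $\Phi_n$ denotes the $n$-th cyclotomic polynomial. Then $h=(x^{\operatorname{lcm}(i_1,\dots,i_k)}-1)^{\max_j e_j}$ is a sparsest multiple of $f$: $h$ is a multiple of $f$, and no nonzero multiple of $f$ in $\mathbb{Q}[x]$ has fewer nonzero coefficients than $h$. *)

From mathcomp Require Import all_boot all_order all_algebra all_field.
Set Implicit Arguments. Unset Strict Implicit. Unset Printing Implicit Defensive.
Import GRing.Theory.
Local Open Scope ring_scope.

Definition PhiQ (n : nat) : {poly rat} := map_poly intr ('Phi_n).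

Definition nnz (p : {poly rat}) : nat := count (fun c => c != 0) (polyseq p).

(* The upper bound is a substitution: h = ((Y - 1)^E)(X^L) with E the largest
   exponent, so h has at most E + 1 terms; and f | h because the distinct
   cyclotomic factors Phi_{i_j} all divide X^L - 1 = prod_(d | L) Phi_d.
   The lower bound is a Hasse-type argument: if p(0) != 0, deg p >= 1 and
   p^m | g != 0, then g has more than m terms.  Dividing out the largest power
   of X changes neither the number of terms nor divisibility by p^m (p is
   coprime to X); then the derivative loses exactly the constant term and is
   divisible by p^(m-1).  Applied to each Phi_{i_j}^{e_j} | g this gives
   nnz g > e_j for all j. *)
From mathcomp Require Import all_boot all_order all_algebra all_field.
From mathcomp Require Import polyorder.

Set Implicit Arguments.
Unset Strict Implicit.
Unset Printing Implicit Defensive.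

Import GRing.Theory Num.Theory.
Local Open Scope ring_scope.

Lemma nnzE (p : {poly rat}) N : (size p <= N)%N ->
  nnz p = count (fun i => p`_i != 0) (iota 0 N).
Proof.
move=> hN; rewrite /nnz -(subnKC hN) iotaD count_cat.
have -> : count (fun i => p`_i != 0) (iota (0 + size p) (N - size p)) = 0%N.
  apply/eqP; rewrite -leqn0 leqNgt -has_count; apply/hasPn => j.
  by rewrite mem_iota add0n => /andP[hj _]; rewrite nth_default // eqxx.
by rewrite addn0 -[in LHS](mkseq_nth 0 p) /mkseq count_map.
Qed.

Lemma nnz_le_size (p : {poly rat}) : (nnz p <= size p)%N.
Proof. exact: count_size. Qed.

Lemma nnz_gt0 (g : {poly rat}) : g != 0 -> (0 < nnz g)%N.
Proof.
move=> gn0; rewrite /nnz -has_count; apply/hasP; exists (lead_coef g).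
  by rewrite lead_coefE mem_nth // prednK // size_poly_gt0.
by rewrite lead_coef_eq0.
Qed.

Lemma nnz_le_support (p : {poly rat}) s :
  (forall i, p`_i != 0 -> i \in s) -> (nnz p <= size s)%N.
Proof.
move=> supp_s; rewrite (nnzE (leqnn _)) -size_filter; apply: uniq_leq_size.
  by rewrite filter_uniq // iota_uniq.
by move=> x; rewrite mem_filter => /andP[/supp_s].
Qed.

Lemma nnz_mulXn (g : {poly rat}) n : nnz (g * 'X^n) = nnz g.
Proof.
have [-> | gn0] := eqVneq g 0; first by rewrite mul0r.
by rewrite /nnz polyseqMXn // -cat_nseq count_cat count_nseq /= mul0n.
Qed.

Lemma nnz_deriv (g : {poly rat}) : g`_0 != 0 -> nnz g = (nnz g^`()).+1.
Proof.
move=> g0; have size_g' : (size g^`() <= size g)%N by rewrite size_deriv leq_pred.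
rewrite (nnzE (leqnSn (size g))) (nnzE size_g') /= g0.
rewrite -[1%N]addn0 iotaDl count_map add1n; congr S.
by apply: eq_count => j /=; rewrite coef_deriv mulrn_eq0.
Qed.

Lemma nnz_comp_Xn (q : {poly rat}) n : (0 < n)%N -> (nnz (q \Po 'X^n) <= nnz q)%N.
Proof.
move=> n_gt0.
set s := [seq (j * n)%N | j <- [seq j <- iota 0 (size q) | q`_j != 0]].
apply: (@leq_trans (size s)); last by rewrite size_map size_filter -nnzE.
apply: nnz_le_support => x; rewrite coef_comp_poly_Xn //.
case: dvdnP => [[j ->] | _]; last by rewrite eqxx.
rewrite mulnK // => qj; apply: map_f; rewrite mem_filter qj mem_iota /=.
by apply: contraNT qj; rewrite -leqNgt => /(nth_default 0) ->.
Qed.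

Lemma dvdp_exp_deriv (R : fieldType) (p g : {poly R}) m :
  p ^+ m.+1 %| g -> p ^+ m %| g^`().
Proof.
case/dvdpP=> q ->; rewrite derivM deriv_exp /=; apply: dvdp_add.
  by apply: dvdp_mull; rewrite exprS dvdp_mulIr.
by rewrite mulrnAr mulrA -mulrnAl dvdp_mulIr.
Qed.

Lemma nnz_dvdp_exp (p : {poly rat}) m g :
  (1 < size p)%N -> ~~ root p 0 -> g != 0 -> p ^+ m %| g -> (m < nnz g)%N.
Proof.
move=> size_p p0 gn0; elim: m g gn0 => [g gn0 _ | m IHm g gn0 pm_g].
  exact: nnz_gt0.
have [n [q q0 Dg]] := multiplicity_XsubC g 0.
rewrite gn0 polyC0 subr0 /= in q0 Dg.
have qn0 : q != 0 by apply: contraNneq gn0 => q_0; rewrite Dg q_0 mul0r.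
have pm_q : p ^+ m.+1 %| q.
  have cop : coprimep (p ^+ m.+1) ('X ^+ n).
    apply/coprimep_expl/coprimep_expr.
    by rewrite -[Y in coprimep _ Y]subr0 -polyC0 coprimep_XsubC.
  by rewrite -(Gauss_dvdpl _ cop) -Dg.
have size_q : (1 < size q)%N.
  exact: leq_trans size_p (dvdp_leq qn0 (dvdp_trans (dvdp_exp _ (dvdpp p)) pm_q)).
have q'n0 : q^`() != 0 by rewrite -size_poly_gt0 size_deriv -subn1 subn_gt0.
rewrite Dg nnz_mulXn nnz_deriv; last by rewrite -horner_coef0.
by rewrite ltnS; apply: IHm => //; apply: dvdp_exp_deriv.
Qed.

Lemma dvdp_prod_subseq (R : idomainType) (T : eqType) (F : T -> {poly R}) s t :
  uniq s -> uniq t -> {subset s <= t} ->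
  \prod_(x <- s) F x %| \prod_(x <- t) F x.
Proof.
move=> s_uniq t_uniq s_t.
have perm_s : perm_eq s [seq x <- t | x \in s].
  apply: uniq_perm; rewrite ?filter_uniq // => x.
  by rewrite mem_filter; case: (boolP (x \in s)) => // /s_t.
rewrite (perm_big _ perm_s) big_filter [X in _ %| X](bigID (mem s)) /=.
exact: dvdp_mulIl.
Qed.

Lemma dvdp_prod_exp_bigmax (R : idomainType) k (F : 'I_k -> {poly R})
    (e : 'I_k -> nat) :
  \prod_(j < k) F j ^+ e j %| (\prod_(j < k) F j) ^+ \max_(j < k) e j.
Proof.
rewrite -prodrXl; elim/big_ind2: _ => // [x1 x2 y1 y2|j _].
  exact: dvdp_mul.
by apply: dvdp_exp2l; apply: leq_bigmax.
Qed.

Lemma PhiQ_prod n : (0 < n)%N -> \prod_(d <- divisors n) PhiQ d = 'X^n - 1.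
Proof.
move=> n_gt0; rewrite /PhiQ -rmorph_prod prod_Cyclotomic //.
by rewrite rmorphB /= map_polyXn rmorph1.
Qed.

Lemma PhiQ_size_gt1 n : (0 < n)%N -> (1 < size (PhiQ n))%N.
Proof.
move=> n_gt0; rewrite /PhiQ size_map_poly_id0 ?size_Cyclotomic ?ltnS ?totient_gt0 //.
by rewrite (monicP (Cyclotomic_monic n)) rmorph1 oner_neq0.
Qed.

Lemma PhiQ_root0 n : (0 < n)%N -> ~~ root (PhiQ n) 0.
Proof.
move=> n_gt0; have : PhiQ n %| 'X^n - 1.
  rewrite -PhiQ_prod // (bigD1_seq n) ?divisors_uniq ?dvdp_mulIl //.
  by rewrite -dvdn_divisors.
move/root_dvdp/contra; apply.
by rewrite /root !hornerE expr0n gtn_eqF // sub0r oppr_eq0 oner_eq0.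
Qed.

Theorem corollary4p2 (k : nat) (i e : 'I_k -> nat)
  (i_inj : injective i) (i_pos : forall j, (0 < i j)%N) (e_pos : forall j, (0 < e j)%N) :
  let f : {poly rat} := \prod_(j < k) PhiQ (i j) ^+ e j in
  let h : {poly rat} :=
    ('X^(\big[lcmn/1%N]_(j < k) i j) - 1) ^+ (\max_(j < k) e j) in
  (f %| h)%R /\ (forall g : {poly rat}, g != 0 -> (f %| g)%R -> (nnz h <= nnz g)%N).
Proof.
move=> f h; set L := \big[lcmn/1%N]_(j < k) i j; set E := \max_(j < k) e j.
have L_gt0 : (0 < L)%N by elim/big_ind: L => // x y; rewrite lcmn_gt0 => -> ->.
have i_dvd_L j : (i j %| L)%N by apply: (dvdn_biglcmP _ _ _ (dvdnn L)).
split.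
  apply: dvdp_trans (dvdp_prod_exp_bigmax (PhiQ \o i) e) _; apply: dvdp_exp2r.
  rewrite -PhiQ_prod // -(big_map i predT PhiQ).
  apply: dvdp_prod_subseq; rewrite ?divisors_uniq ?(map_inj_uniq i_inj) ?index_enum_uniq //.
  by move=> _ /mapP[j _ ->]; rewrite -dvdn_divisors.
move=> g gn0 f_g.
have -> : h = (('X - 1) ^+ E) \Po 'X^L.
  by rewrite rmorphXn /= comp_polyB comp_polyX -polyC1 comp_polyC.
apply: (leq_trans (nnz_comp_Xn _ L_gt0)).
apply: (leq_trans (nnz_le_size _)); rewrite -polyC1 size_exp_XsubC.
have e_lt_nnz j : (e j < nnz g)%N.
  apply: nnz_dvdp_exp (PhiQ_size_gt1 (i_pos j)) (PhiQ_root0 (i_pos j)) gn0 _.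
  by apply: dvdp_trans f_g; rewrite /f (bigD1 j) //= dvdp_mulIl.
rewrite -(prednK (nnz_gt0 gn0)) ltnS; apply/bigmax_leqP => j _.
by rewrite -ltnS prednK ?nnz_gt0 ?e_lt_nnz.
Qed.
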